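(* Let $\mathbb M$ be a reflexive $\mathcal R$-module. Then $\mathbb M$ is dually separated if and only if there exist a set $I$ and a monomorphism of $\mathcal R$-modules $\mathbb M^*\hookrightarrow\prod_{I}\mathcal R$.
   Context: $R$ is a commutative ring; $\mathcal R$ is the functor $S\mapsto S$ on commutative $R$-algebras. An $\mathcal R$-module is a covariant functor $\mathbb M$ from commutative $R$-algebras to abelian groups with each $\mathbb M(S)$ an $S$-module, functorially; morphisms are natural transformations that are $S$-linear on each $S$. $\mathbb M^*(S)=\operatorname{Hom}_{\mathcal S}(\mathbb M_{|S},\mathcal S)$ where $\mathbb M_{|S}$ is restriction to $S$-algebras. $\mathbb M$ is reflexive if the natural morphism $\mathbb M\to\mathbb M^{**}$, $m\mapsto(w\mapsto w(m))$, is an isomorphism. $\mathbb M$ is dually separated if for every commutative $R$-algebra $S$ the map $\mathbb M^*(S)\to\operatorname{Hom}_R(\mathbb M(R),S)$, $w\mapsto w_R$, is injective. *)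

From HB Require Import structures.
From mathcomp Require Import all_boot all_algebra.
Set Implicit Arguments. Unset Strict Implicit. Unset Printing Implicit Defensive.
Import GRing.Theory.
Local Open Scope ring_scope.

Record calg (R : comPzRingType) := CAlg {
  calg_sort :> comPzRingType;
  calg_str : {rmorphism R -> calg_sort} }.

Definition calgR (R : comPzRingType) : calg R := @CAlg R R idfun.

Record ahom (R : comPzRingType) (S T : calg R) := AHom {
  ahom_fun :> {rmorphism S -> T};
  ahom_comm : forall r, ahom_fun (calg_str S r) = calg_str T r }.

Definition ahom_id (R : comPzRingType) (S : calg R) : ahom S S :=
  @AHom R S S idfun (fun r => erefl).

Lemma ahom_comp_comm (R : comPzRingType) (S T U : calg R) (f : ahom S T) (g : ahom T U) r :
  ((g : {rmorphism T -> U}) \o (f : {rmorphism S -> T})) (calg_str S r) = calg_str U r.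
Proof. by rewrite /= !ahom_comm. Qed.

Definition ahom_comp (R : comPzRingType) (S T U : calg R) (f : ahom S T) (g : ahom T U)
  : ahom S U := @AHom R S U ((g : {rmorphism T -> U}) \o (f : {rmorphism S -> T}))
                 (ahom_comp_comm f g).

Definition ahom_str (R : comPzRingType) (S : calg R) : ahom (calgR R) S :=
  @AHom R (calgR R) S (calg_str S) (fun r => erefl).

(* Raw data of a functor M from commutative R-algebras to (abelian groups with an
   M(S)-scalar action); the axioms are in [is_RMod]. *)
Record PMod (R : comPzRingType) := PModMk {
  pm_ob : calg R -> Type;
  pm_zero : forall S, pm_ob S;
  pm_add : forall S, pm_ob S -> pm_ob S -> pm_ob S;
  pm_opp : forall S, pm_ob S -> pm_ob S;
  pm_scale : forall S : calg R, S -> pm_ob S -> pm_ob S;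
  pm_map : forall S T : calg R, ahom S T -> pm_ob S -> pm_ob T }.

Definition is_RMod (R : comPzRingType) (M : PMod R) : Prop :=
  (forall S : calg R,
     (forall x y z : pm_ob M S, pm_add (pm_add x y) z = pm_add x (pm_add y z)) /\
     (forall x y : pm_ob M S, pm_add x y = pm_add y x) /\
     (forall x : pm_ob M S, pm_add (pm_zero M S) x = x) /\
     (forall x : pm_ob M S, pm_add (pm_opp x) x = pm_zero M S) /\
     (forall (a : S) (x y : pm_ob M S),
        pm_scale a (pm_add x y) = pm_add (pm_scale a x) (pm_scale a y)) /\
     (forall (a b : S) (x : pm_ob M S),
        pm_scale (a + b) x = pm_add (pm_scale a x) (pm_scale b x)) /\
     (forall (a b : S) (x : pm_ob M S), pm_scale a (pm_scale b x) = pm_scale (a * b) x) /\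
     (forall x : pm_ob M S, pm_scale 1 x = x)) /\
  (forall (S T : calg R) (f : ahom S T) (x y : pm_ob M S),
     pm_map f (pm_add x y) = pm_add (pm_map f x) (pm_map f y)) /\
  (forall (S T : calg R) (f : ahom S T) (a : S) (x : pm_ob M S),
     pm_map f (pm_scale a x) = pm_scale (f a) (pm_map f x)) /\
  (forall (S : calg R) (f : ahom S S), (forall s, f s = s) ->
     forall x : pm_ob M S, pm_map f x = x) /\
  (forall (S T U : calg R) (f : ahom S T) (g : ahom T U) (h : ahom S U),
     (forall s, h s = g (f s)) ->
     forall x : pm_ob M S, pm_map h x = pm_map g (pm_map f x)).

Record RMod (R : comPzRingType) := RModMk { rm_pmod :> PMod R; rm_ax : is_RMod rm_pmod }.

(* Elements of M^*(S) = Hom_S(M_{|S}, S): families of maps M(T) -> T indexed by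
   S-algebras (T, phi : S -> T), T-linear, natural in S-algebra morphisms. *)
Record dual_elt (R : comPzRingType) (M : PMod R) (S : calg R) := DualElt {
  dw :> forall T : calg R, ahom S T -> pm_ob M T -> T;
  dw_add : forall T (phi : ahom S T) (x y : pm_ob M T),
      dw phi (pm_add x y) = dw phi x + dw phi y;
  dw_scale : forall T (phi : ahom S T) (t : T) (x : pm_ob M T),
      dw phi (pm_scale t x) = t * dw phi x;
  dw_nat : forall T T' (phi : ahom S T) (phi' : ahom S T') (g : ahom T T'),
      (forall s, g (phi s) = phi' s) ->
      forall x : pm_ob M T, dw phi' (pm_map g x) = g (dw phi x) }.

Section Dual.
Variables (R : comPzRingType) (M : PMod R).

Definition dual_zero (S : calg R) : dual_elt M S.
Proof.
refine (@DualElt R M S (fun T _ _ => 0) _ _ _).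
- by move=> *; rewrite addr0.
- by move=> *; rewrite mulr0.
- by move=> *; rewrite rmorph0.
Defined.

Definition dual_add (S : calg R) (w1 w2 : dual_elt M S) : dual_elt M S.
Proof.
refine (@DualElt R M S (fun T phi x => w1 T phi x + w2 T phi x) _ _ _).
- by move=> T phi x y; rewrite !dw_add addrACA.
- by move=> T phi t x; rewrite !dw_scale mulrDr.
- by move=> T T' phi phi' g H x; rewrite (dw_nat w1 H) (dw_nat w2 H) rmorphD.
Defined.

Definition dual_opp (S : calg R) (w : dual_elt M S) : dual_elt M S.
Proof.
refine (@DualElt R M S (fun T phi x => - w T phi x) _ _ _).
- by move=> T phi x y; rewrite !dw_add opprD.
- by move=> T phi t x; rewrite !dw_scale mulrN.
- by move=> T T' phi phi' g H x; rewrite (dw_nat w H) rmorphN.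
Defined.

Definition dual_scale (S : calg R) (s : S) (w : dual_elt M S) : dual_elt M S.
Proof.
refine (@DualElt R M S (fun T phi x => phi s * w T phi x) _ _ _).
- by move=> T phi x y; rewrite !dw_add mulrDr.
- by move=> T phi t x; rewrite !dw_scale mulrCA.
- by move=> T T' phi phi' g H x; rewrite (dw_nat w H) rmorphM H.
Defined.

Definition dual_map (S S' : calg R) (f : ahom S S') (w : dual_elt M S) : dual_elt M S'.
Proof.
refine (@DualElt R M S' (fun T psi x => w T (ahom_comp f psi) x) _ _ _).
- by move=> T psi x y; rewrite dw_add.
- by move=> T psi t x; rewrite dw_scale.
- move=> T T' psi psi' g H x; apply: dw_nat => s /=; exact: H.
Defined.

Definition dual : PMod R :=
  @PModMk R (dual_elt M) dual_zero dual_add dual_opp dual_scale dual_map.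

End Dual.

(* The canonical morphism M -> M^**, m |-> (w |-> w(m)), at S:
   ev(m)_{(T,phi)}(w) = w_{(T,id)}(M(phi) m). *)
Definition ev (R : comPzRingType) (M : RMod R) (S : calg R) (m : pm_ob M S)
  : pm_ob (dual (dual M)) S.
Proof.
refine (@DualElt R (dual M) S
          (fun T phi w => w T (ahom_id T) (pm_map phi m)) _ _ _).
- by [].
- by [].
- move=> T T' phi phi' g H w /=.
  have [_ [_ [_ [_ Hc]]]] := rm_ax M.
  rewrite (Hc _ _ _ phi g phi' (fun s => esym (H s))).
  by apply: dw_nat.
Defined.

Definition is_reflexive (R : comPzRingType) (M : RMod R) : Prop :=
  forall S : calg R, bijective (@ev R M S).

Definition w_R (R : comPzRingType) (M : PMod R) (S : calg R) (w : dual_elt M S)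
  : pm_ob M (calgR R) -> S :=
  fun m => w S (ahom_id S) (pm_map (ahom_str S) m).

Definition dually_separated (R : comPzRingType) (M : PMod R) : Prop :=
  forall (S : calg R) (w w' : dual_elt M S), (forall m, w_R w m = w_R w' m) -> w = w'.

Definition prodR (R : comPzRingType) (I : Type) : PMod R :=
  @PModMk R (fun S => I -> S) (fun S _ => 0) (fun S v v' i => v i + v' i)
    (fun S v i => - v i) (fun S s v i => s * v i) (fun S T f v i => f (v i)).

Definition is_hom (R : comPzRingType) (M N : PMod R)
  (phi : forall S, pm_ob M S -> pm_ob N S) : Prop :=
  (forall S (x y : pm_ob M S), phi S (pm_add x y) = pm_add (phi S x) (phi S y)) /\
  (forall (S : calg R) (s : S) (x : pm_ob M S), phi S (pm_scale s x) = pm_scale s (phi S x)) /\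
  (forall S T (f : ahom S T) (x : pm_ob M S), phi T (pm_map f x) = pm_map f (phi S x)).

(** An element of [M^*(S)] is seen by [w |-> w_R] as an [S]-valued function on
    [M(R)], and this is a morphism [M^* -> prod_{M(R)} R]; it is a monomorphism
    exactly when [M] is dually separated.  Conversely, each coordinate of a
    morphism [M^* -> prod_I R] is an element of [M^**(R)], which by reflexivity
    is evaluation at some [m_i] in [M(R)]; so that morphism factors through
    [w |-> w_R], and its injectivity forces dual separation. *)

From HB Require Import structures.
From mathcomp Require Import all_boot all_algebra.
From Stdlib Require Import FunctionalExtensionality.

Set Implicit Arguments.

Section DualSeparation.
Variables (R : comPzRingType) (M : RMod R).

Lemma w_R_map (S T : calg R) (f : ahom S T) (w : dual_elt M S) m :
  w_R (dual_map f w) m = f (w_R w m).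
Proof.
have [_ [_ [_ [_ map_comp]]]] := rm_ax M.
rewrite /w_R /= (map_comp _ _ _ (ahom_str S) f (ahom_str T)); last first.
  by move=> r /=; rewrite ahom_comm.
by apply: dw_nat.
Qed.

Definition w_R_prod {S : calg R} (w : pm_ob (dual M) S)
  : pm_ob (prodR R (pm_ob M (calgR R))) S := w_R w.

Lemma is_hom_w_R_prod : is_hom (@w_R_prod).
Proof.
split; [|split] => *; apply: functional_extensionality => m //.
exact: w_R_map.
Qed.

Lemma dually_separated_injective_w_R_prod :
  dually_separated M <-> forall S, injective (@w_R_prod S).
Proof.
split=> [sep S w w' eq_ww' | inj S w w' eq_ww'].
  by apply: sep => m; rewrite -/(w_R_prod w m) eq_ww'.
exact/inj/functional_extensionality.
Qed.

Section Coordinates.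
Variables (I : Type) (phi : forall S : calg R, pm_ob (dual M) S -> pm_ob (prodR R I) S).
Hypothesis phi_hom : is_hom phi.

Definition hom_coord (i : I) : pm_ob (dual (dual M)) (calgR R).
Proof.
refine (@DualElt R (dual M) (calgR R) (fun T _ w => phi w i) _ _ _);
  case: phi_hom => phiD [phiZ phi_nat].
- by move=> T psi x y /=; rewrite phiD.
- by move=> T psi t x /=; rewrite phiZ.
- by move=> T T' psi psi' g _ x /=; rewrite phi_nat.
Defined.

(* [ev m], read at the structure map [R -> S], is [w |-> w_R w m]. *)
Lemma hom_coordE i m :
  ev m = hom_coord i -> forall (S : calg R) (w : pm_ob (dual M) S), phi w i = w_R w m.
Proof.
move=> evm S w; change (phi w i = dw (ev m) (ahom_str S) w).
by rewrite evm.
Qed.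

End Coordinates.

End DualSeparation.

Theorem proposition4p1 (R : comPzRingType) (M : RMod R) :
  is_reflexive M ->
  (dually_separated M <->
   exists (I : Type) (phi : forall S : calg R, pm_ob (dual M) S -> pm_ob (prodR R I) S),
     is_hom phi /\ (forall S : calg R, injective (phi S))).
Proof.
move=> refl; split.
  move=> /dually_separated_injective_w_R_prod inj.
  by exists (pm_ob M (calgR R)), (@w_R_prod R M); split; [exact: is_hom_w_R_prod|].
case=> I [phi [phi_hom phi_inj]] S w w' eq_ww'.
have [ev_inv _ ev_invK] := refl (calgR R).
apply: phi_inj; apply: functional_extensionality => i.
by rewrite !(hom_coordE (phi_hom := phi_hom) (ev_invK _)) eq_ww'.
Qed.
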